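(* Let $\beta^*\in\mathbb{R}^p$ with support $S$ and $s=|S|$. Let $\ell_0(\beta)=\frac{1}{2t_0}\sum_{j=1}^{t_0}(y_{0j}-x_{0j}^\top\beta)^2$, $\ell_j(\beta)=\frac12(y_j-x_j^\top\beta)^2$ for $j\ge1$, positive weights $w_{t,j}$ with $W_t=\sum_{j=1}^t w_{t,j}$, and $$L_t(\beta;\tilde\beta)=\ell_0(\beta)-\nabla\ell_0(\tilde\beta)^\top\beta+\Big\langle \sum_{j=1}^t\frac{w_{t,j}}{W_t}\nabla\ell_j(\tilde\beta),\beta\Big\rangle .$$ Suppose $\ell_0$ satisfies the RSC condition with parameter $\kappa>0$. Let $\hat\beta_{t-1}\in\mathbb{R}^p$, $\lambda_t>0$ with $\lambda_t\ge2\|\nabla L_t(\beta^*;\hat\beta_{t-1})\|_\infty$, and let $\hat\beta_t$ be a minimizer over $\mathbb{R}^p$ of $\beta\mapsto L_t(\beta;\hat\beta_{t-1})+\lambda_t\|\beta\|_1$. Then $$\|\hat\beta_t-\beta^*\|_1\le\frac{16s}{\kappa}\big(\lambda_t+\|\nabla L_t(\beta^*;\hat\beta_{t-1})\|_\infty\big)\le\frac{24s}{\kappa}\lambda_t$$ and $$\|\hat\beta_t-\beta^*\|_2^2\le\frac{\lambda_t+\|\nabla L_t(\beta^*;\hat\beta_{t-1})\|_\infty}{\kappa}\,\|\hat\beta_t-\beta^*\|_1 .$$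
   Context: A function $f:\mathbb{R}^p\to\mathbb{R}$ satisfies the RSC condition with parameter $\kappa>0$ if for every $\Delta\in\mathcal{C}_S=\{\xi\in\mathbb{R}^p:\|\xi_{S^c}\|_1\le3\|\xi_S\|_1\}$ one has $f(\beta^*+\Delta)-f(\beta^* )-\Delta^\top\nabla f(\beta^* )\ge\kappa\|\Delta\|_2^2$; here $\xi_{\mathcal{A}}$ keeps the entries of $\xi$ indexed by $\mathcal{A}$ and zeroes the others. Gradients of $L_t$ are taken with respect to its first argument. The data points are arbitrary elements of $\mathbb{R}^p\times\mathbb{R}$. *)

From HB Require Import structures.
From mathcomp Require Import all_boot all_order all_algebra.
From mathcomp Require Import all_classical all_reals all_analysis.
Set Implicit Arguments. Unset Strict Implicit. Unset Printing Implicit Defensive.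
Import Order.TTheory GRing.Theory Num.Theory.
Import numFieldNormedType.Exports.
Local Open Scope ring_scope.

Section Defs.
Variables (R : realType) (p : nat).
Implicit Types (v b : 'rV[R]_p) (f : 'rV[R]_p -> R).

Definition grad f b : 'rV[R]_p := \row_i derive f b (delta_mx 0 i).

Definition inner (u v : 'rV[R]_p) : R := \sum_i u 0 i * v 0 i.
Definition norm1 v : R := \sum_i `|v 0 i|.
Definition norminf v : R := \big[Num.max/0]_i `|v 0 i|.
Definition norm2sq v : R := \sum_i (v 0 i) ^+ 2.

Definition supp v : {set 'I_p} := [set i | v 0 i != 0].
Definition restr (A : {set 'I_p}) v : 'rV[R]_p := \row_i (if i \in A then v 0 i else 0).

Definition cone (S : {set 'I_p}) v : Prop := norm1 (restr (~: S) v) <= 3 * norm1 (restr S v).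

Definition RSC f (bstar : 'rV[R]_p) (kappa : R) : Prop :=
  forall D, cone (supp bstar) D ->
    f (bstar + D) - f bstar - inner D (grad f bstar) >= kappa * norm2sq D.

Definition ell0 (t0 : nat) (x0 : 'I_t0 -> 'rV[R]_p) (y0 : 'I_t0 -> R) b : R :=
  (2 * t0%:R)^-1 * \sum_(j < t0) (y0 j - inner (x0 j) b) ^+ 2.
Definition ellj (xj : 'rV[R]_p) (yj : R) b : R := 2^-1 * (yj - inner xj b) ^+ 2.

Definition Lt (t0 : nat) (x0 : 'I_t0 -> 'rV[R]_p) (y0 : 'I_t0 -> R)
    (t : nat) (w : nat -> R) (x : nat -> 'rV[R]_p) (y : nat -> R)
    (b bt : 'rV[R]_p) : R :=
  let W := \sum_(1 <= j < t.+1) w j in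
  ell0 x0 y0 b - inner (grad (ell0 x0 y0) bt) b
  + inner (\sum_(1 <= j < t.+1) (w j / W) *: grad (ellj (x j) (y j)) bt) b.

End Defs.

(** Adding a linear term to a function does not change its Bregman divergence
    [f (b + D) - f b - <D, grad f b>].  For the quadratic source loss [ell0]
    this divergence is the nonnegative form [(2 t0)^-1 sum_j <x0j, D>^2], and
    [L_t(.; bprev)] is [ell0] plus a linear term, so it inherits the RSC
    condition and lies above its tangents.  What remains is the deterministic
    Lasso argument: comparing [bhat] with [bstar] and applying Hoelder's
    inequality gives the basic inequality, which forces [D = bhat - bstar]
    into the cone [|D_S^c|_1 <= 3 |D_S|_1] since [lambda >= 2 g] with
    [g = |grad L_t(bstar)|_inf]; on the cone, RSC and Cauchy-Schwarz
    [|D_S|_1^2 <= s |D|_2^2] bound both norms of [D]. *)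
From HB Require Import structures.
From mathcomp Require Import all_boot all_order all_algebra.
From mathcomp Require Import all_classical all_reals all_analysis.
From mathcomp Require Import ring lra.
Import Order.TTheory GRing.Theory Num.Theory.
Import numFieldNormedType.Exports.
Local Open Scope ring_scope.
Local Open Scope classical_set_scope.
Set Implicit Arguments. Unset Strict Implicit.

Lemma derive_quadratic_line (R : realType) (V W : normedModType R)
    (f : V -> W) (b v : V) (a c : W) :
  (forall h : R, f (h *: v + b) = f b + h *: a + h ^+ 2 *: c) ->
  'D_v f b = a.
Proof.
move=> f_line; apply: cvg_lim => //.
have lin_cvg : (fun h : R => a + h *: c) @ 0^' --> a.
  rewrite -[X in _ --> X]addr0 -(scale0r c).
  apply: cvgD; first exact: cvg_cst.
  by apply: cvgZr_tmp; apply: cvg_within_filter; exact: cvg_id.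
apply: cvg_trans lin_cvg; apply: near_eq_cvg; near=> h.
have h_neq0 : h != 0 by near: h; exact: nbhs_dnbhs_neq.
have -> : f (h *: v + b) - f b = h *: (a + h *: c).
  by rewrite f_line -[f b + _ + _]addrA addrC addrK scalerDr scalerA -expr2.
by rewrite /= scalerA mulVf // scale1r.
Unshelve. all: by end_near.
Qed.

Lemma sqr_sum_le_card (R : realFieldType) (I : finType) (A : {pred I})
    (f : I -> R) :
  (\sum_(i in A) f i) ^+ 2 <= #|A|%:R * \sum_(i in A) f i ^+ 2.
Proof.
have double_sum : 2 * (#|A|%:R * \sum_(i in A) f i ^+ 2)
    = \sum_(i in A) \sum_(j in A) (f i ^+ 2 + f j ^+ 2).
  under [RHS]eq_bigr do rewrite big_split /= sumr_const.
  by rewrite big_split /= sumrMnl sumr_const -mulr2n !mulr_natl.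
rewrite -(@ler_pM2l _ 2) // double_sum expr2 big_distrl mulr_sumr /=.
apply: ler_sum => i _; rewrite big_distrr mulr_sumr /=; apply: ler_sum => j _.
by have := sqr_ge0 (f i - f j); nra.
Qed.

Section InnerAndNorms.
Variables (R : realType) (p : nat).
Implicit Types (u v w : 'rV[R]_p).

Lemma innerC u v : inner u v = inner v u.
Proof. by apply: eq_bigr => i _; rewrite mulrC. Qed.

Lemma innerDr u v w : inner u (v + w) = inner u v + inner u w.
Proof.
by rewrite /inner -big_split; apply: eq_bigr => i _; rewrite mxE mulrDr.
Qed.

Lemma innerZr u a v : inner u (a *: v) = a * inner u v.
Proof.
by rewrite /inner mulr_sumr; apply: eq_bigr => i _; rewrite mxE mulrCA.
Qed.

Lemma innerBr u v w : inner u (v - w) = inner u v - inner u w.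
Proof. by rewrite -scaleN1r innerDr innerZr mulN1r. Qed.

Lemma inner0r u : inner u 0 = 0.
Proof. by rewrite -(scale0r 0) innerZr mul0r. Qed.

Lemma inner_sumr (I : finType) u (F : I -> 'rV[R]_p) :
  inner u (\sum_j F j) = \sum_j inner u (F j).
Proof.
rewrite /inner exchange_big /=; apply: eq_bigr => i _.
by rewrite summxE mulr_sumr.
Qed.

Lemma inner_deltal i u : inner (delta_mx 0 i) u = u 0 i.
Proof.
rewrite /inner (bigD1 i) //= big1 ?addr0; first by rewrite mxE !eqxx mul1r.
by move=> j /negbTE ji; rewrite mxE ji andbF mul0r.
Qed.

Lemma norm1_ge0 v : 0 <= norm1 v.
Proof. by apply: sumr_ge0 => i _. Qed.

Lemma norminf_ge0 v : 0 <= norminf v.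
Proof.
by apply: (big_ind (fun x => 0 <= x)) => // x y x0 _; rewrite le_max x0.
Qed.

Lemma ler_norminf v i : `|v 0 i| <= norminf v.
Proof. exact: (le_bigmax_cond _ (P := xpredT)). Qed.

Lemma norm_inner_le u v : `|inner u v| <= norminf v * norm1 u.
Proof.
rewrite /norm1 mulr_sumr; apply: le_trans (ler_norm_sum _ _ _) _.
by apply: ler_sum => i _; rewrite normrM mulrC ler_wpM2r ?ler_norminf.
Qed.

Lemma norm1_restr (A : {set 'I_p}) v :
  norm1 (restr A v) = \sum_(i in A) `|v 0 i|.
Proof.
rewrite /norm1 [RHS]big_mkcond; apply: eq_bigr => i _; rewrite mxE.
by case: ifP; rewrite ?normr0.
Qed.

Lemma norm1_restrC (A : {set 'I_p}) v :
  norm1 v = norm1 (restr A v) + norm1 (restr (~: A) v).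
Proof.
rewrite /norm1 -big_split; apply: eq_bigr => i _; rewrite !mxE inE.
by case: (i \in A) => /=; rewrite normr0 ?addr0 ?add0r.
Qed.

(* Off [supp b] the perturbation adds [|D_i|] to the l1 norm, on it it
   removes at most [|D_i|]. *)
Lemma norm1_subD_le (b D : 'rV[R]_p) :
  norm1 b - norm1 (b + D) <=
  norm1 (restr (supp b) D) - norm1 (restr (~: supp b) D).
Proof.
rewrite /norm1 -!sumrB; apply: ler_sum => i _; rewrite !mxE !inE.
case: eqP => [->|_] /=; first by rewrite add0r normr0 !sub0r.
rewrite normr0 subr0.
by have := ler_normD (b 0 i + D 0 i) (- D 0 i); rewrite addrK normrN; lra.
Qed.

Lemma norm1_restr_sqr_le (A : {set 'I_p}) v :
  norm1 (restr A v) ^+ 2 <= #|A|%:R * norm2sq v.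
Proof.
rewrite norm1_restr; apply: le_trans (sqr_sum_le_card _ _) _.
rewrite ler_wpM2l // /norm2sq [leRHS](bigID (mem A)) /=.
under eq_bigr do rewrite (real_normK (num_real _)).
by rewrite lerDl; apply: sumr_ge0 => i _; exact: sqr_ge0.
Qed.

End InnerAndNorms.

Definition bregman (R : realType) (p : nat) (f : 'rV[R]_p -> R)
    (b D : 'rV[R]_p) : R :=
  f (b + D) - f b - inner D (grad f b).

Section TiltedSourceLoss.
Variables (R : realType) (p t0 : nat).
Variables (x0 : 'I_t0 -> 'rV[R]_p) (y0 : 'I_t0 -> R).

Definition ell0_tilt (c b : 'rV[R]_p) : R := ell0 x0 y0 b + inner c b.

Definition ell0_curv (v : 'rV[R]_p) : R :=
  (2 * t0%:R)^-1 * \sum_j inner (x0 j) v ^+ 2.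

Definition ell0_tilt_grad (c b : 'rV[R]_p) : 'rV[R]_p :=
  c - (2 * (2 * t0%:R)^-1) *: \sum_j (y0 j - inner (x0 j) b) *: x0 j.

Lemma ell0_curv_ge0 v : 0 <= ell0_curv v.
Proof.
rewrite mulr_ge0 ?invr_ge0 ?mulr_ge0 //.
by apply: sumr_ge0 => j _; exact: sqr_ge0.
Qed.

Lemma ell0_tilt_line c b v h :
  ell0_tilt c (h *: v + b)
  = ell0_tilt c b + h * inner v (ell0_tilt_grad c b) + h ^+ 2 * ell0_curv v.
Proof.
rewrite /ell0_tilt /ell0 /ell0_tilt_grad /ell0_curv.
rewrite innerBr innerZr inner_sumr innerDr innerZr.
under eq_bigr do rewrite innerDr innerZr.
under [X in _ = _ + _ * (_ - _ * X) + _]eq_bigr do rewrite innerZr (innerC v).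
have -> : \sum_j (y0 j - (h * inner (x0 j) v + inner (x0 j) b)) ^+ 2 =
    \sum_j (y0 j - inner (x0 j) b) ^+ 2
    - 2 * h * \sum_j (y0 j - inner (x0 j) b) * inner (x0 j) v
    + h ^+ 2 * \sum_j inner (x0 j) v ^+ 2.
  by rewrite !mulr_sumr -sumrB -big_split; apply: eq_bigr => j _ /=; ring.
by rewrite (innerC v c); ring.
Qed.

Lemma grad_ell0_tilt c b : grad (ell0_tilt c) b = ell0_tilt_grad c b.
Proof.
apply/rowP => i; rewrite mxE.
apply: (derive_quadratic_line (c := ell0_curv (delta_mx 0 i))) => h.
by rewrite ell0_tilt_line inner_deltal.
Qed.

Lemma bregman_ell0_tilt c b D : bregman (ell0_tilt c) b D = ell0_curv D.
Proof.
rewrite /bregman grad_ell0_tilt -[D in b + D]scale1r [b + _]addrC.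
rewrite ell0_tilt_line.
by rewrite mul1r expr1n mul1r; ring.
Qed.

Lemma RSC_ell0_tilt c b kappa :
  RSC (ell0 x0 y0) b kappa -> RSC (ell0_tilt c) b kappa.
Proof.
have ell0E : ell0 x0 y0 = ell0_tilt 0.
  by apply/funext => b'; rewrite /ell0_tilt innerC inner0r addr0.
move=> rsc D /rsc; rewrite ell0E.
by rewrite -/(bregman _ b D) -/(bregman (ell0_tilt c) b D) !bregman_ell0_tilt.
Qed.

Lemma Lt_ell0_tilt t w x y bt b :
  Lt x0 y0 t w x y b bt
  = ell0_tilt (\sum_(1 <= j < t.+1) (w j / \sum_(1 <= j < t.+1) w j)
                 *: grad (ellj (x j) (y j)) bt - grad (ell0 x0 y0) bt) b.
Proof.
by rewrite /Lt /ell0_tilt [inner (_ - _) b]innerC innerBr !(innerC b); ring.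
Qed.

End TiltedSourceLoss.

Section LassoError.
Variables (R : realType) (p : nat) (F : 'rV[R]_p -> R).
Variables (bstar bhat : 'rV[R]_p) (kappa lambda : R).

Let S := supp bstar.
Let D := bhat - bstar.
Let g := norminf (grad F bstar).
Let dS := norm1 (restr S D).
Let dSc := norm1 (restr (~: S) D).

Hypothesis kappa_gt0 : 0 < kappa.
Hypothesis lambda_gt0 : 0 < lambda.
Hypothesis lambda_ge : 2 * g <= lambda.
Hypothesis F_RSC : RSC F bstar kappa.
Hypothesis bregman_ge0 : forall E, 0 <= bregman F bstar E.
Hypothesis bhat_min :
  forall b, F bhat + lambda * norm1 bhat <= F b + lambda * norm1 b.

Lemma lasso_basic_inequality :
  bregman F bstar D <= (lambda + g) * dS - (lambda - g) * dSc.
Proof.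
have bstarD : bstar + D = bhat by rewrite addrC subrK.
have l1_gap := norm1_subD_le bstar D; rewrite bstarD -/S -/dS -/dSc in l1_gap.
have := ler_wpM2l (ltW lambda_gt0) l1_gap.
have := bhat_min bstar.
have := norm_inner_le D (grad F bstar); rewrite ler_norml => /andP[+ _].
rewrite (norm1_restrC S D) -/g -/dS -/dSc /bregman bstarD.
nra.
Qed.

Lemma lasso_cone : cone S D.
Proof.
have g_ge0 : 0 <= g := norminf_ge0 _.
have gap_gt0 : 0 < lambda - g by move: g_ge0 lambda_ge lambda_gt0; lra.
have slack : 0 <= (lambda - 2 * g) * dS.
  by rewrite mulr_ge0 ?norm1_ge0 ?subr_ge0.
have basic := le_trans (bregman_ge0 D) lasso_basic_inequality.
rewrite /cone -/dS -/dSc -(ler_pM2l gap_gt0).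
by move: basic slack; nra.
Qed.

Lemma lasso_norm2sq_le : kappa * norm2sq D <= (lambda + g) * dS.
Proof.
have rsc : kappa * norm2sq D <= bregman F bstar D := F_RSC lasso_cone.
have g_ge0 : 0 <= g := norminf_ge0 _.
have : 0 <= (lambda - g) * dSc.
  by rewrite mulr_ge0 ?norm1_ge0 //; move: lambda_ge g_ge0; lra.
by move: rsc lasso_basic_inequality; lra.
Qed.

Lemma lasso_norm1_supp_le : kappa * dS <= #|S|%:R * (lambda + g).
Proof.
have g_ge0 : 0 <= g := norminf_ge0 _.
have [->|dS_neq0] := eqVneq dS 0.
  by rewrite mulr0 mulr_ge0 //; move: lambda_gt0 g_ge0; lra.
have dS_gt0 : 0 < dS by rewrite lt0r dS_neq0 norm1_ge0.
rewrite -(ler_pM2r dS_gt0).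
have := ler_wpM2l (ltW kappa_gt0) (norm1_restr_sqr_le S D).
have := ler_wpM2l (ler0n _ #|S|) lasso_norm2sq_le.
rewrite -/dS; nra.
Qed.

Theorem lasso_error_bounds :
  norm1 D <= 16 * #|S|%:R / kappa * (lambda + g)
  /\ 16 * #|S|%:R / kappa * (lambda + g) <= 24 * #|S|%:R / kappa * lambda
  /\ norm2sq D <= (lambda + g) / kappa * norm1 D.
Proof.
have g_ge0 : 0 <= g := norminf_ge0 _.
have dS_ge0 : 0 <= dS := norm1_ge0 _.
have l1_split : norm1 D = dS + dSc := norm1_restrC S D.
have cone_D : dSc <= 3 * dS := lasso_cone.
split; [|split].
- rewrite mulrAC ler_pdivlMr // l1_split.
  have : 0 <= #|S|%:R * (lambda + g).
    by rewrite mulr_ge0 //; move: lambda_gt0 g_ge0; lra.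
  by move: cone_D lasso_norm1_supp_le kappa_gt0; nra.
- rewrite -!mulrA !(mulrC _^-1) !mulrA ler_pM2r ?invr_gt0 //.
  rewrite [16 * _]mulrC [24 * _]mulrC -!mulrA ler_wpM2l //.
  by move: lambda_ge; lra.
- rewrite mulrAC (ler_pdivlMr _ _ kappa_gt0).
  have : (lambda + g) * dS <= (lambda + g) * norm1 D.
    rewrite ler_wpM2l ?l1_split ?lerDl ?norm1_ge0 //.
    by move: lambda_gt0 g_ge0; lra.
  by move: lasso_norm2sq_le; nra.
Qed.

End LassoError.

Theorem lemma2 (R : realType) (p : nat) (bstar : 'rV[R]_p)
  (t0 : nat) (x0 : 'I_t0 -> 'rV[R]_p) (y0 : 'I_t0 -> R)
  (t : nat) (w : nat -> R) (x : nat -> 'rV[R]_p) (y : nat -> R)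
  (kappa lambda : R) (bprev bhat : 'rV[R]_p) :
  (0 < t0)%N -> (0 < t)%N ->
  (forall j, (1 <= j <= t)%N -> 0 < w j) ->
  0 < kappa -> RSC (ell0 x0 y0) bstar kappa ->
  0 < lambda ->
  2 * norminf (grad (fun b => Lt x0 y0 t w x y b bprev) bstar) <= lambda ->
  (forall b, Lt x0 y0 t w x y bhat bprev + lambda * norm1 bhat
             <= Lt x0 y0 t w x y b bprev + lambda * norm1 b) ->
  let s := #|supp bstar| in
  let g := norminf (grad (fun b => Lt x0 y0 t w x y b bprev) bstar) in
  norm1 (bhat - bstar) <= 16 * s%:R / kappa * (lambda + g)
  /\ 16 * s%:R / kappa * (lambda + g) <= 24 * s%:R / kappa * lambda
  /\ norm2sq (bhat - bstar) <= (lambda + g) / kappa * norm1 (bhat - bstar).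
Proof.
move=> _ _ _ kappa_gt0 rsc lambda_gt0 lambda_ge bhat_min s g.
have Lt_tilt := Lt_ell0_tilt x0 y0 t w x y bprev.
rewrite /g /s (funext Lt_tilt) in lambda_ge *.
apply: lasso_error_bounds => //.
- exact: RSC_ell0_tilt.
- by move=> D; rewrite bregman_ell0_tilt ell0_curv_ge0.
- by move=> b; rewrite -!Lt_tilt.
Qed.
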